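(* Let $\mathsf{X}=\mathbb{R}^d$, $\mathsf{Y}=\mathbb{R}^{d'}$, $T\in\mathbb{N}$, and consider a hidden Markov model with initial density $\mu$ on $\mathsf{X}$, transition density $f$ on $\mathsf{X}$, and observation density $g:\mathsf{X}\times\mathsf{Y}\to\mathbb{R}_+$ (bounded, continuous), i.e. $(X_t)$ is a Markov chain with $X_1\sim\mu$, $X_t\mid X_{t-1}=x\sim f(x,\cdot)$, and let $\mathbb{E}$ denote expectation under this law. Fix observations $y_{1:T}\in\mathsf{Y}^T$ and let $L:=\mathbb{E}\left[\prod_{t=1}^T g(X_t,y_t)\right]>0$. Define $\boldsymbol\psi^*=(\psi_1^*,\dots,\psi_T^* )$ by $\psi_T^*(x_T):=g(x_T,y_T)$ and $$\psi_t^*(x_t):=g(x_t,y_t)\,\mathbb{E}\Big[\prod_{p=t+1}^T g(X_p,y_p)\,\Big|\,X_t=x_t\Big],\qquad x_t\in\mathsf{X},\ t\in\{1,\dots,T-1\},$$ and assume each $\psi_t^*$ is positive. Then for every $N\in\mathbb{N}$, the estimate $Z^N_{\boldsymbol\psi^*}$ produced by the $\boldsymbol\psi^*$-auxiliary particle filter with $N$ particles satisfies $Z^N_{\boldsymbol\psi^*}=L$ with probability $1$.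
   Context: For a transition density $f$ and function $\psi$ write $f(x,\psi):=\int_{\mathsf{X}}f(x,x')\psi(x')\,dx'$. Given positive functions $\boldsymbol\psi=(\psi_1,\dots,\psi_T)$, define $\tilde\psi_t(x):=f(x,\psi_{t+1})$ for $t\in\{1,\dots,T-1\}$, $\tilde\psi_T\equiv 1$, $\tilde\psi_0:=\int\mu(x_1)\psi_1(x_1)\,dx_1$, and the twisted model $\mu_1^{\boldsymbol\psi}(x_1):=\mu(x_1)\psi_1(x_1)/\tilde\psi_0$; $f_t^{\boldsymbol\psi}(x_{t-1},x_t):=f(x_{t-1},x_t)\psi_t(x_t)/\tilde\psi_{t-1}(x_{t-1})$ ($t\ge2$); $g_1^{\boldsymbol\psi}(x_1):=g(x_1,y_1)\tilde\psi_1(x_1)\tilde\psi_0/\psi_1(x_1)$, $g_t^{\boldsymbol\psi}(x_t):=g(x_t,y_t)\tilde\psi_t(x_t)/\psi_t(x_t)$ ($t\ge2$). The $\boldsymbol\psi$-auxiliary particle filter with $N$ particles: sample $\xi_1^i\sim\mu_1^{\boldsymbol\psi}$ independently for $i=1,\dots,N$; for $t=2,\dots,T$ sample independently $\xi_t^i\sim \sum_{j=1}^N g_{t-1}^{\boldsymbol\psi}(\xi_{t-1}^j)f_t^{\boldsymbol\psi}(\xi_{t-1}^j,\cdot)\big/\sum_{j=1}^N g_{t-1}^{\boldsymbol\psi}(\xi_{t-1}^j)$, $i=1,\dots,N$. Its estimate is $Z^N_{\boldsymbol\psi}:=\prod_{t=1}^T\big[\frac1N\sum_{i=1}^N g_t^{\boldsymbol\psi}(\xi_t^i)\big]$.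 *)

From HB Require Import structures.
From mathcomp Require Import all_boot all_order all_algebra.
From mathcomp Require Import all_classical all_reals all_analysis.

Set Implicit Arguments.
Unset Strict Implicit.
Unset Printing Implicit Defensive.

Import Order.TTheory GRing.Theory Num.Theory.
Import numFieldNormedType.Exports.
Local Open Scope classical_set_scope.
Local Open Scope ring_scope.

Section APF.
Variable R : realType.

(* Lebesgue integral over R^d of a nonnegative function, written as    *)
(* the iterated one-dimensional Lebesgue integral over the coordinates *)
(* (Tonelli).                                                           *)

Definition consrow (d : nat) (x : R) (v : 'rV[R]_d) : 'rV[R]_d.+1 :=
  \row_(i < d.+1) match unlift ord0 i with Some j => v ord0 j | None => x end.

Fixpoint intRd (d : nat) : ('rV[R]_d -> \bar R) -> \bar R :=
  match d return ('rV[R]_d -> \bar R) -> \bar R with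
  | 0 => fun F => F 0
  | d'.+1 => fun F =>
      (\int[@lebesgue_measure R]_x intRd (fun v => F (consrow x v)))%E
  end.

Definition RintRd (d : nat) (F : 'rV[R]_d -> R) : R :=
  fine (intRd (fun x => (F x)%:E)).

(* the identification of d-tuples (carrying the product = Borel         *)
(* sigma-algebra of mathcomp-analysis) with row vectors                 *)
Definition t2r (d : nat) (t : d.-tuple R) : 'rV[R]_d := \row_i tnth t i.

Definition borel_fun (d : nat) (F : 'rV[R]_d -> R) : Prop :=
  measurable_fun setT (fun t : d.-tuple R => F (t2r t)).
Definition borel_fun2 (d : nat) (F : 'rV[R]_d -> 'rV[R]_d -> R) : Prop :=
  measurable_fun setT (fun p : d.-tuple R * d.-tuple R => F (t2r p.1) (t2r p.2)).

Variables (d d' : nat).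
Local Notation X := 'rV[R]_d.
Local Notation Y := 'rV[R]_d'.

(* The law of a finite stretch of the chain is given by iterated        *)
(* integrals of the densities.  [chain_int mu f n h F] integrates F     *)
(* over n further steps of the chain, started after the already fixed   *)
(* history h (h = [::] : start from the initial law mu;                 *)
(* h = [:: x] : conditionally on the current state being x).            *)
Variables (mu : X -> R) (f : X -> X -> R) (g : X -> Y -> R) (y : nat -> Y).

Definition chain_dens (h : seq X) (x : X) : R :=
  if h is a :: h' then f (last a h') x else mu x.

Fixpoint chain_int (n : nat) (h : seq X) (F : seq X -> \bar R) : \bar R :=
  match n with
  | 0 => F h
  | n'.+1 => intRd (fun x => (chain_dens h x)%:E * chain_int n' (rcons h x) F)%E
  end.

Variable T : nat.

(* L := E[ prod_{t=1}^T g(X_t, y_t) ]  (entry t of the list is X_{t+1}) *)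
Definition Lik : \bar R :=
  chain_int T [::] (fun xs => (\prod_(t < T) g (nth 0 xs t) (y t.+1))%:E).

(* psi*_t(x) := g(x,y_t) E[ prod_{p=t+1}^T g(X_p,y_p) | X_t = x ],     *)
(* for 1 <= t <= T (for t = T the conditional expectation is of the     *)
(* empty product, i.e. psi*_T(x) = g(x, y_T)).  In the list, entry 0 is *)
(* X_t = x and entry p is X_{t+p}.                                       *)
Definition psi_star (t : nat) (x : X) : R :=
  g x (y t) *
  fine (chain_int (T - t) [:: x]
          (fun xs => (\prod_(p < T - t) g (nth 0 xs p.+1) (y (t + p.+1)))%:E)).

(* Twisted model for psi = (psi_1, ..., psi_T)  (psi t used for t>=1)  *)
Variable psi : nat -> X -> R.

Definition psit (t : nat) (x : X) : R :=
  if (t < T)%N then RintRd (fun x' => f x x' * psi t.+1 x') else 1.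

Definition psit0 : R := RintRd (fun x => mu x * psi 1 x).

Definition mu_tw (x : X) : R := mu x * psi 1 x / psit0.

Definition f_tw (t : nat) (x x' : X) : R := f x x' * psi t x' / psit t.-1 x.

Definition g_tw (t : nat) (x : X) : R :=
  if t == 1%N then g x (y 1) * psit 1 x * psit0 / psi 1 x
  else g x (y t) * psit t x / psi t x.

(* The psi-auxiliary particle filter with N particles.  The N*T draws   *)
(* are made in the order xi_1^1..xi_1^N, xi_2^1, ..., xi_T^N; the list  *)
(* h of draws made so far determines the density of the next one.       *)
(* The draw number k = size h belongs to time k %/ N + 1.               *)
Variable N : nat.

Definition generation (h : seq X) (t : nat) : seq X :=
  take N (drop (t.-1 * N) h).

Definition apf_dens (h : seq X) (x : X) : R :=
  let t := (size h %/ N)%N in  (* previous time, 1-based; new draw at time t+1 *)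
  if t == 0%N then mu_tw x
  else (\sum_(z <- generation h t) g_tw t z * f_tw t.+1 z x) /
       (\sum_(z <- generation h t) g_tw t z).

Fixpoint apf_int (n : nat) (h : seq X) (F : seq X -> \bar R) : \bar R :=
  match n with
  | 0 => F h
  | n'.+1 => intRd (fun x => (apf_dens h x)%:E * apf_int n' (rcons h x) F)%E
  end.

Definition apf_prob (E : seq X -> bool) : \bar R :=
  apf_int (N * T) [::] (fun h => ((E h : nat)%:R)%:E).

Definition apf_Z (h : seq X) : R :=
  \prod_(t < T) (N%:R^-1 * \sum_(z <- generation h t.+1) g_tw t.+1 z).

End APF.

(* Under the optimal twisting psi*, the twisted potentials are deterministic.
   Indeed psi*_t = g(., y_t) f(., psi*_{t+1}) = g(., y_t) psi~_t, so
   g_t^{psi*} = 1 for t >= 2, while g_1^{psi*} = psi~_0 = int mu psi*_1 = L.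
   Every factor of Z^N is therefore a constant, Z^N = L for every realization
   of the particles, and the event Z^N <> L is empty. *)

From HB Require Import structures.
From mathcomp Require Import all_boot all_order all_algebra.
From mathcomp Require Import all_classical all_reals all_analysis.

Import Order.TTheory GRing.Theory Num.Theory.
Import numFieldNormedType.Exports.
Local Open Scope classical_set_scope.
Local Open Scope ring_scope.

(* The iterated integrals [intRd] integrate functions whose measurability is
   not known, so monotonicity and homogeneity are derived directly from the
   definition of the integral as a supremum over simple functions. *)
Section ge0_integral_nonmeasurable.
Local Open Scope ereal_scope.
Context d (T : measurableType d) (R : realType).
Variable mu : {measure set T -> \bar R}.
Import HBNNSimple.

Lemma ge0_le_integral_nomeas (f1 f2 : T -> \bar R) : (forall x, 0 <= f1 x) ->
  (forall x, f1 x <= f2 x) -> \int[mu]_x f1 x <= \int[mu]_x f2 x.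
Proof.
move=> f10 f12.
have f20 x : 0 <= f2 x by exact: le_trans (f10 x) (f12 x).
rewrite !ge0_integralTE//.
apply: ereal_sup_le => _ [h hf1 <-]; exists h => //= x.
exact: le_trans (hf1 x) (f12 x).
Qed.

Lemma ge0_integralZl_nomeas (f : T -> \bar R) (k : R) :
  (forall x, 0 <= f x) -> (0 <= k)%R ->
  \int[mu]_x (k%:E * f x) = k%:E * \int[mu]_x f x.
Proof.
move=> f0; rewrite le_eqVlt => /orP[/eqP<-|k0].
  rewrite mul0e; under eq_integral do rewrite mul0e.
  exact: integral0.
have kf0 x : 0 <= k%:E * f x by rewrite mule_ge0// lee_fin ltW.
have k0' : 0 < k%:E by rewrite lte_fin.
rewrite !ge0_integralTE// -ereal_supZl; last 2 first.
- by apply/set0P; exists (sintegral mu nnsfun0); exists nnsfun0 => //= x; rewrite f0.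
- exact: ltW.
congr ereal_sup; apply/seteqP; split.
- move=> _ [h hf <-].
  have ki : (0 <= k^-1)%R by rewrite invr_ge0 ltW.
  exists (sintegral mu (scale_nnsfun h ki)).
    exists (scale_nnsfun h ki) => //= x.
    rewrite -(@lee_pmul2l _ k%:E)// EFinM muleA -EFinM mulfV ?gt_eqF// mul1r.
    exact: hf.
  rewrite (_ : (scale_nnsfun h ki : T -> R) = (cst k^-1 \* h)%R)// sintegralrM.
  by rewrite muleA -EFinM mulfV ?gt_eqF// mul1e.
- move=> _ [_ [h hf <-] <-].
  exists (scale_nnsfun h (ltW k0)).
    by move=> x /=; rewrite EFinM lee_pmul2l//; exact: hf.
  by rewrite (_ : (scale_nnsfun h (ltW k0) : T -> R) = (cst k \* h)%R)// sintegralrM.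
Qed.

End ge0_integral_nonmeasurable.

Section intRd.
Local Open Scope ereal_scope.
Variable R : realType.

Lemma intRd_ge0 (d : nat) (F : 'rV[R]_d -> \bar R) :
  (forall v, 0 <= F v) -> 0 <= intRd F.
Proof.
elim: d F => [|d IH] F F0 /=; first exact: F0.
by apply: integral_ge0 => x _; apply: IH.
Qed.

Lemma le_intRd (d : nat) (F G : 'rV[R]_d -> \bar R) :
  (forall v, 0 <= F v) -> (forall v, F v <= G v) -> intRd F <= intRd G.
Proof.
elim: d F G => [|d IH] F G F0 FG /=; first exact: FG.
apply: ge0_le_integral_nomeas => x; first exact: intRd_ge0.
exact: IH.
Qed.

Lemma intRdZl (d : nat) (F : 'rV[R]_d -> \bar R) (k : R) :
  (forall v, 0 <= F v) -> (0 <= k)%R ->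
  intRd (fun v => k%:E * F v) = k%:E * intRd F.
Proof.
elim: d F => [|d IH] F F0 k0 //=.
rewrite -ge0_integralZl_nomeas//; last by move=> x; exact: intRd_ge0.
by congr integral; apply: funext => x; rewrite IH.
Qed.

Lemma intRd0 (d : nat) : intRd (fun _ : 'rV[R]_d => 0) = 0.
Proof.
elim: d => [|d IH] //=.
rewrite (_ : (fun x => _) = cst 0); first exact: integral0.
by apply: funext => x; rewrite IH.
Qed.

End intRd.

Section chain_int.
Local Open Scope ereal_scope.
Variables (R : realType) (d : nat).
Variables (mu : 'rV[R]_d -> R) (f : 'rV[R]_d -> 'rV[R]_d -> R).
Hypothesis mu_ge0 : forall x, (0 <= mu x)%R.
Hypothesis f_ge0 : forall x x', (0 <= f x x')%R.
Hypothesis mu_int1 : intRd (fun x => (mu x)%:E) = 1.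
Hypothesis f_int1 : forall x, intRd (fun x' => (f x x')%:E) = 1.

Lemma chain_dens_ge0 h x : (0 <= chain_dens mu f h x)%R.
Proof. by case: h => [|a h] /=; [exact: mu_ge0|exact: f_ge0]. Qed.

Lemma chain_dens_int1 h : intRd (fun x => (chain_dens mu f h x)%:E) = 1.
Proof. by case: h => [|a h] /=; [exact: mu_int1|exact: f_int1]. Qed.

Lemma chain_int_ge0 n h F : (forall l, 0 <= F l) -> 0 <= chain_int mu f n h F.
Proof.
elim: n h => [|n IH] h F0 /=; first exact: F0.
apply: intRd_ge0 => x; apply: mule_ge0; first by rewrite lee_fin chain_dens_ge0.
exact: IH.
Qed.

Lemma chain_int_le_cst n h F (B : R) : (forall l, 0 <= F l) ->
  (forall l, F l <= B%:E) -> (0 <= B)%R -> chain_int mu f n h F <= B%:E.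
Proof.
move=> F0 FB B0; elim: n h => [|n IH] h /=; first exact: FB.
apply: (@le_trans _ _ (intRd (fun x => B%:E * (chain_dens mu f h x)%:E))).
  apply: le_intRd => x.
    by apply: mule_ge0; [rewrite lee_fin chain_dens_ge0|exact: chain_int_ge0].
  by rewrite muleC; apply: lee_wpmul2r; [rewrite lee_fin chain_dens_ge0|exact: IH].
by rewrite intRdZl ?chain_dens_int1 ?mule1// => x; rewrite lee_fin chain_dens_ge0.
Qed.

Lemma chain_intZl n h F (k : R) : (forall l, 0 <= F l) -> (0 <= k)%R ->
  chain_int mu f n h (fun l => k%:E * F l) = k%:E * chain_int mu f n h F.
Proof.
move=> F0 k0; elim: n h => [|n IH] h //=.
rewrite -intRdZl//; last first.
  by move=> x; apply: mule_ge0; [rewrite lee_fin chain_dens_ge0|exact: chain_int_ge0].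
by congr intRd; apply: funext => x; rewrite IH muleCA.
Qed.

Lemma eq_chain_int n h F G : (forall l, F (h ++ l) = G (h ++ l)) ->
  chain_int mu f n h F = chain_int mu f n h G.
Proof.
elim: n h => [|n IH] h FG /=; first by have := FG [::]; rewrite cats0.
congr intRd; apply: funext => x; rewrite IH// => l.
by rewrite cat_rcons.
Qed.

(* Only the last state of a nonempty history matters for the chain. *)
Lemma chain_int_behead n a h F : h != [::] ->
  chain_int mu f n (a :: h) F = chain_int mu f n h (fun l => F (a :: l)).
Proof.
elim: n h => [|n IH] h hn //=.
congr intRd; apply: funext => x.
rewrite -rcons_cons IH; last by case: (h).
by case: h hn.
Qed.

End chain_int.

Section optimal_twisting.
Local Open Scope ereal_scope.
Variables (R : realType) (d d' : nat).
Variables (mu : 'rV[R]_d -> R) (f : 'rV[R]_d -> 'rV[R]_d -> R)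
  (g : 'rV[R]_d -> 'rV[R]_d' -> R) (y : nat -> 'rV[R]_d') (T : nat).
Hypothesis T_gt0 : (0 < T)%N.
Hypothesis mu_ge0 : forall x, (0 <= mu x)%R.
Hypothesis f_ge0 : forall x x', (0 <= f x x')%R.
Hypothesis g_ge0 : forall x v, (0 <= g x v)%R.
Hypothesis mu_int1 : intRd (fun x => (mu x)%:E) = 1.
Hypothesis f_int1 : forall x, intRd (fun x' => (f x x')%:E) = 1.
Hypothesis g_bounded : exists M : R, forall x v, (g x v <= M)%R.
Hypothesis psi_star_gt0 :
  forall t, (1 <= t <= T)%N -> forall x, (0 < psi_star mu f g y T t x)%R.

Local Notation psi := (psi_star mu f g y T).

Definition future_lik t x := chain_int mu f (T - t) [:: x]
  (fun xs => (\prod_(p < T - t) g (nth 0 xs p.+1) (y (t + p.+1)))%:E).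

Lemma psi_starE t x : psi t x = (g x (y t) * fine (future_lik t x))%R.
Proof. by []. Qed.

Lemma prod_g_ge0 (n : nat) (F : 'I_n -> 'rV[R]_d) (Y : 'I_n -> 'rV[R]_d') :
  0 <= (\prod_(p < n) g (F p) (Y p))%:E.
Proof. by rewrite lee_fin; apply: prodr_ge0 => p _; exact: g_ge0. Qed.

Lemma future_lik_fin_num t x : (1 <= t <= T)%N -> future_lik t x \is a fin_num.
Proof.
move=> tT; have := psi_star_gt0 t tT x; rewrite psi_starE.
by case: (future_lik t x) => //=; rewrite mulr0 ltxx.
Qed.

Lemma future_likS t x : (1 <= t)%N -> (t < T)%N ->
  future_lik t x =
  intRd (fun x' => (f x x')%:E * ((g x' (y t.+1))%:E * future_lik t.+1 x')).
Proof.
move=> t1 tT; rewrite /future_lik (_ : T - t = (T - t.+1).+1)%N; last by rewrite subnSK.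
rewrite /=; congr intRd; apply: funext => x'.
rewrite (@chain_int_behead R d mu f _ x [:: x'])//=.
congr (_ * _); rewrite -chain_intZl//; last by move=> l; exact: prod_g_ge0.
apply: eq_chain_int => l /=.
rewrite big_ord_recl /= -EFinM addn1; congr ((_ * _)%:E).
by apply: eq_bigr => i _; rewrite addSnnS.
Qed.

Lemma g_mul_psit_psi_star t x : (1 <= t <= T)%N ->
  (g x (y t) * psit f T psi t x)%R = psi t x.
Proof.
move=> /andP[t1 tT]; rewrite /psit; case: ifPn => [tT'|].
  rewrite psi_starE /RintRd future_likS//; congr (_ * fine (intRd _))%R.
  apply: funext => x'; rewrite psi_starE !EFinM fineK//.
  by apply: future_lik_fin_num; rewrite tT' andbT.
rewrite -leqNgt => Tt; have -> : t = T by apply/eqP; rewrite eqn_leq tT.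
by rewrite psi_starE /future_lik subnn /= big_ord0 mulr1.
Qed.

Lemma g_tw_psi_star t x : (1 <= t <= T)%N ->
  g_tw mu f g y T psi t x = if t == 1%N then psit0 mu psi else 1%R.
Proof.
move=> tT; have psi_gt0 := psi_star_gt0 t tT x.
rewrite /g_tw; case: eqP => [t1|_]; last by rewrite g_mul_psit_psi_star// divff ?gt_eqF.
rewrite -t1 g_mul_psit_psi_star//.
by rewrite mulrC mulrA mulVf ?gt_eqF// mul1r.
Qed.

Lemma Lik_psi_star1 : Lik mu f g y T = intRd (fun x => (mu x * psi 1 x)%:E).
Proof.
have [n Tn] : exists n, T = n.+1 by exists T.-1; rewrite prednK.
rewrite /Lik [in LHS]Tn /=; congr intRd; apply: funext => x.
rewrite psi_starE !EFinM fineK; last by apply: future_lik_fin_num; rewrite leqnn T_gt0.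
congr (_ * _); rewrite /future_lik Tn subn1 /= -chain_intZl//; last first.
  by move=> l; exact: prod_g_ge0.
by apply: eq_chain_int => l /=; rewrite big_ord_recl /= -EFinM.
Qed.

Lemma Lik_fin_num : Lik mu f g y T \is a fin_num.
Proof.
have [M gM] := g_bounded.
have M0 : (0 <= M)%R by exact: le_trans (g_ge0 0%R 0%R) (gM 0%R 0%R).
have L0 : 0 <= Lik mu f g y T by apply: chain_int_ge0 => // l; exact: prod_g_ge0.
rewrite ge0_fin_numE//; apply: (@le_lt_trans _ _ (M ^+ T)%:E); last exact: ltry.
apply: chain_int_le_cst => //; last exact: exprn_ge0.
  by move=> l; exact: prod_g_ge0.
move=> l; rewrite lee_fin -[in X in (_ <= X)%R](card_ord T) -prodr_const.
by apply: ler_prod => i _; rewrite g_ge0 gM.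
Qed.

Lemma psit0_psi_star : (psit0 mu psi)%:E = Lik mu f g y T.
Proof. by rewrite /psit0 /RintRd -Lik_psi_star1 fineK// Lik_fin_num. Qed.

Lemma apf_Z_psi_star N h : (0 < N)%N -> size h = (N * T)%N ->
  apf_Z mu f g y T psi N h = psit0 mu psi.
Proof.
move=> N_gt0 sizeh; rewrite /apf_Z.
have gen_size (t : 'I_T) : size (generation N h t.+1) = N.
  rewrite size_takel// size_drop sizeh /= [(t * N)%N]mulnC -mulnBr.
  by rewrite leq_pmulr// subn_gt0.
have factorE (t : 'I_T) :
    (N%:R^-1 * \sum_(z <- generation N h t.+1) g_tw mu f g y T psi t.+1 z)%R =
    if (t : nat) == 0%N then psit0 mu psi else 1%R.
  rewrite (eq_bigr (fun _ => if (t : nat) == 0%N then psit0 mu psi else 1%R)).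
    rewrite big_const_seq count_predT iter_addr_0 gen_size.
    rewrite -[X in (_ * X)%R]mulr_natl mulrA.
    by rewrite mulVf ?mul1r// pnatr_eq0 -lt0n.
  by move=> z _; rewrite g_tw_psi_star// ltn_ord.
rewrite (eq_bigr _ (fun t _ => factorE t)).
rewrite -(big_mkord xpredT (fun t => if t == 0%N then psit0 mu psi else 1%R)).
rewrite big_ltn// eqxx big_nat_cond big1 ?mulr1// => t /andP[/andP[t_gt0 _] _].
by rewrite gtn_eqF.
Qed.

End optimal_twisting.

Lemma apf_int_eq0 (R : realType) (d d' : nat) (mu : 'rV[R]_d -> R)
    (f : 'rV[R]_d -> 'rV[R]_d -> R) (g : 'rV[R]_d -> 'rV[R]_d' -> R)
    (y : nat -> 'rV[R]_d') (T : nat) (psi : nat -> 'rV[R]_d -> R) (N n : nat)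
    (h : seq 'rV[R]_d) (F : seq 'rV[R]_d -> \bar R) :
  (forall l, size l = (size h + n)%N -> F l = 0%E) ->
  apf_int mu f g y T psi N n h F = 0%E.
Proof.
elim: n h => [|n IH] h F0 /=; first by apply: F0; rewrite addn0.
rewrite (_ : (fun x => _) = fun _ => 0%E); first exact: intRd0.
apply: funext => x; rewrite IH ?mule0// => l sizel.
by apply: F0; rewrite sizel size_rcons addSnnS.
Qed.

Theorem proposition2 (R : realType) (d d' T : nat)
  (mu : 'rV[R]_d -> R) (f : 'rV[R]_d -> 'rV[R]_d -> R)
  (g : 'rV[R]_d -> 'rV[R]_d' -> R) (y : nat -> 'rV[R]_d') :
  (0 < T)%N ->
  (* mu is a probability density on R^d *)
  (forall x, 0 <= mu x) -> borel_fun mu -> intRd (fun x => (mu x)%:E) = 1%E ->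
  (* f is a transition density on R^d *)
  (forall x x', 0 <= f x x') -> borel_fun2 f ->
  (forall x, intRd (fun x' => (f x x')%:E) = 1%E) ->
  (* g is a nonnegative, bounded, continuous observation density *)
  (forall x v, 0 <= g x v) -> (exists M : R, forall x v, g x v <= M) ->
  continuous (fun p : 'rV[R]_d * 'rV[R]_d' => g p.1 p.2) ->
  (* L > 0 *)
  (0 < Lik mu f g y T)%E ->
  (* each psi*_t is positive *)
  (forall t, (1 <= t <= T)%N -> forall x, 0 < psi_star mu f g y T t x) ->
  forall N : nat, (0 < N)%N ->
  apf_prob mu f g y T (psi_star mu f g y T) N
    (fun h => (apf_Z mu f g y T (psi_star mu f g y T) N h)%:E != Lik mu f g y T) = 0%E.
Proof.
move=> T_gt0 mu_ge0 _ mu_int1 f_ge0 _ f_int1 g_ge0 g_bounded _ _ psi_gt0 N N_gt0.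
apply: apf_int_eq0 => h /= sizeh.
by rewrite apf_Z_psi_star// psit0_psi_star// eqxx.
Qed.
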